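(* Let $f_1,f_2,f_3,f_4$ be strongly hyperbolic functions with $f_1(1)=f_3(1)=1$. The plane $\mathcal{M}(f_1,f_2;f_3,f_4)$ is isomorphic to the classical flat Minkowski plane if and only if $f_i(x)=1/x$ for $i=1,2,3,4$.
   Context: Identify $\mathbb{S}^1$ with $\mathbb{R}\cup\{\infty\}$, $\mathcal{P}=\mathbb{S}^1\times\mathbb{S}^1$, $\mathbb{R}^+=(0,\infty)$. A function $f:\mathbb{R}^+\to\mathbb{R}^+$ is strongly hyperbolic if: (1) $\lim_{x\to0+}f(x)=+\infty$, $\lim_{x\to+\infty}f(x)=0$; (2) $f$ strictly convex; (3) $\lim_{x\to+\infty}f(x+b)/f(x)=1$ for each $b\in\mathbb{R}$; (4) $f$ differentiable; (5) $\ln|f'|$ strictly convex. For strongly hyperbolic $f_1,f_2$, $a>0$, $b,c\in\mathbb{R}$: $f_{a,b,c}(x)=af_1(x+b)+c$ for $x>-b$, $f_{a,b,c}(x)=-af_2(-x-b)+c$ for $x<-b$; $\overline{f_{a,b,c}}=\{(x,f_{a,b,c}(x)):x\ne-b\}\cup\{(-b,\infty),(\infty,c)\}$; $\overline{l_{s,t}}=\{(x,sx+t):x\in\mathbb{R}\}\cup\{(\infty,\infty)\}$; $\mathcal{C}^-(f_1,f_2)=\{\overline{f_{a,b,c}}:a>0,b,c\in\mathbb{R}\}\cup\{\overline{l_{s,t}}:s<0\}$; $\mathcal{C}^+(f_1,f_2)=\varphi(\mathcal{C}^-(f_1,f_2))$ with $\varphi(x,y)=(-x,y)$, $-\infty=\infty$.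 The plane $\mathcal{M}(f_1,f_2;f_3,f_4)$ has point set $\mathcal{P}$ and circle set $\mathcal{C}^-(f_1,f_2)\cup\mathcal{C}^+(f_3,f_4)$. The classical flat Minkowski plane has point set $\mathcal{P}$ and circles the sets $\{(x,sx+t):x\in\mathbb{R}\}\cup\{(\infty,\infty)\}$ ($s\ne0$, $t\in\mathbb{R}$) and $\{(x,y)\in\mathbb{R}^2:(x-b)(y-c)=a\}\cup\{(\infty,c),(b,\infty)\}$ ($a\ne0$, $b,c\in\mathbb{R}$). An isomorphism between two such planes is a bijection of point sets mapping circles onto circles and inducing a bijection of the circle sets. *)

From Stdlib Require Import Reals.
From Coquelicot Require Import Coquelicot.
Open Scope R_scope.

(** S^1 = R ∪ {∞} is modelled by [option R], with [None] = ∞. *)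
Definition S1 := option R.
Definition point := (S1 * S1)%type.
Definition pset := point -> Prop.
Definition circle_set := pset -> Prop.

Definition strictly_convex_pos (g : R -> R) : Prop :=
  forall x y t, 0 < x -> 0 < y -> x <> y -> 0 < t < 1 ->
    g (t * x + (1 - t) * y) < t * g x + (1 - t) * g y.

(** Strongly hyperbolic function f : R^+ -> R^+ (f is a total function on R,
    only its values on (0,+oo) matter). *)
Definition strongly_hyperbolic (f : R -> R) : Prop :=
  (forall x, 0 < x -> 0 < f x) /\
  filterlim f (at_right 0) (Rbar_locally p_infty) /\
  filterlim f (Rbar_locally p_infty) (locally 0) /\
  strictly_convex_pos f /\
  (forall b : R, filterlim (fun x => f (x + b) / f x)
                            (Rbar_locally p_infty) (locally 1)) /\
  (forall x, 0 < x -> ex_derive f x) /\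
  strictly_convex_pos (fun x => ln (Rabs (Derive f x))).

Definition fabc_curve (f1 f2 : R -> R) (a b c : R) : pset :=
  fun p => match p with
  | (Some x, Some y) =>
      (-b < x /\ y = a * f1 (x + b) + c) \/ (x < -b /\ y = - a * f2 (- x - b) + c)
  | (Some x, None) => x = - b
  | (None, Some y) => y = c
  | (None, None) => False
  end.

Definition line_curve (s t : R) : pset :=
  fun p => match p with
  | (Some x, Some y) => y = s * x + t
  | (None, None) => True
  | _ => False
  end.

Definition pset_eq (C D : pset) : Prop := forall p, C p <-> D p.

Definition Cminus (f1 f2 : R -> R) : circle_set :=
  fun C => (exists a b c, 0 < a /\ pset_eq C (fabc_curve f1 f2 a b c)) \/
           (exists s t, s < 0 /\ pset_eq C (line_curve s t)).

Definition negS1 (x : S1) : S1 :=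
  match x with Some r => Some (- r) | None => None end.
Definition phi (p : point) : point := (negS1 (fst p), snd p).

Definition image (s : point -> point) (C : pset) : pset :=
  fun q => exists p, C p /\ q = s p.

Definition Cplus (f1 f2 : R -> R) : circle_set :=
  fun C => exists D, Cminus f1 f2 D /\ pset_eq C (image phi D).

Definition M_circles (f1 f2 f3 f4 : R -> R) : circle_set :=
  fun C => Cminus f1 f2 C \/ Cplus f3 f4 C.

Definition hyperbola_curve (a b c : R) : pset :=
  fun p => match p with
  | (Some x, Some y) => (x - b) * (y - c) = a
  | (None, Some y) => y = c
  | (Some x, None) => x = b
  | (None, None) => False
  end.

Definition classical_circles : circle_set :=
  fun C => (exists s t, s <> 0 /\ pset_eq C (line_curve s t)) \/
           (exists a b c, a <> 0 /\ pset_eq C (hyperbola_curve a b c)).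

Definition bijective_pt (s : point -> point) : Prop :=
  (forall p q, s p = s q -> p = q) /\ (forall q, exists p, s p = q).

(** Isomorphism of planes with point set P: a bijection of points mapping
    circles onto circles and inducing a bijection of circle sets
    (injectivity of the induced map is automatic from injectivity of s). *)
Definition isomorphic (C1 C2 : circle_set) : Prop :=
  exists s : point -> point,
    bijective_pt s /\
    (forall C, C1 C -> C2 (image s C)) /\
    (forall D, C2 D -> exists C, C1 C /\ pset_eq D (image s C)).

From Pilot Require Import Defs.
From Stdlib Require Import Reals Lra Classical FinFun.
From Coquelicot Require Import Coquelicot.
Open Scope R_scope.

(* In both planes two distinct points lie on a common circle exactly when they
   differ in both coordinates, so an isomorphism preserves the two parallel
   classes and is of the form (x, y) |-> (alpha x, beta y) or
   (x, y) |-> (beta y, alpha x).  Classical circles are the graphs of Moebius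
   transformations of the projective line, so one factor conjugates every
   circle x |-> h x of M(f1,f2;f3,f4) to a Moebius transformation; normalise
   it to fix 0 and oo and call it d.  The lines y = l x fix 0 and oo, hence
   become dilations, which makes d multiplicative up to the constant d 1.  The
   curves of (f1, f2) and (f3, f4) through (0, oo) and (oo, 0) become maps
   v |-> k / v, so d (f_i y) * d y is constant, equal to d 1 * d 1 by f1 1 =
   f3 1 = 1, which is also d (1 / y) * d y; injectivity of d gives
   f_i y = 1 / y.  Conversely, for f_i = 1/x the two planes have the same
   circles. *)

Lemma Rdiv_neq_0 u v : u <> 0 -> v <> 0 -> u / v <> 0.
Proof. intros; apply Rmult_integral_contrapositive; split; [|apply Rinv_neq_0_compat]; auto. Qed.

(** * Moebius transformations of the projective line *)

Record mat2 := Mat2 { m11 : R; m12 : R; m21 : R; m22 : R }.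

Definition mat2_det (q : mat2) : R := m11 q * m22 q - m12 q * m21 q.

Definition mat2_mul (q1 q2 : mat2) : mat2 :=
  Mat2 (m11 q1 * m11 q2 + m12 q1 * m21 q2) (m11 q1 * m12 q2 + m12 q1 * m22 q2)
       (m21 q1 * m11 q2 + m22 q1 * m21 q2) (m21 q1 * m12 q2 + m22 q1 * m22 q2).

Definition mat2_adj (q : mat2) : mat2 := Mat2 (m22 q) (- m12 q) (- m21 q) (m11 q).

Definition mat2_scale (k : R) (q : mat2) : mat2 :=
  Mat2 (k * m11 q) (k * m12 q) (k * m21 q) (k * m22 q).

(* The point [u : v] of the projective line; [proj 0 0] is the junk value [None]. *)
Definition proj (u v : R) : S1 := if Req_EM_T v 0 then None else Some (u / v).

Definition moebius (q : mat2) (x : S1) : S1 :=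
  match x with
  | Some r => proj (m11 q * r + m12 q) (m21 q * r + m22 q)
  | None => proj (m11 q) (m21 q)
  end.

Lemma proj_eq_None u v : proj u v = None <-> v = 0.
Proof. unfold proj; destruct (Req_EM_T v 0); split; congruence. Qed.

Lemma proj_eq_Some u v y : proj u v = Some y <-> v <> 0 /\ y = u / v.
Proof.
  unfold proj; destruct (Req_EM_T v 0); split.
  - discriminate.
  - tauto.
  - intro H; inversion H; auto.
  - intros [_ ->]; reflexivity.
Qed.

Lemma proj_0 u : proj u 0 = None.
Proof. now apply proj_eq_None. Qed.

Lemma proj_neq0 u v : v <> 0 -> proj u v = Some (u / v).
Proof. intro Hv; now apply proj_eq_Some. Qed.

Lemma proj_scale k u v : k <> 0 -> proj (k * u) (k * v) = proj u v.
Proof.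
  intro Hk. destruct (Req_EM_T v 0) as [->|Hv].
  - now rewrite Rmult_0_r, !proj_0.
  - rewrite !proj_neq0 by (try apply Rmult_integral_contrapositive; tauto).
    f_equal; field; auto.
Qed.

Lemma moebius_proj q u v : ~ (u = 0 /\ v = 0) ->
  moebius q (proj u v) = proj (m11 q * u + m12 q * v) (m21 q * u + m22 q * v).
Proof.
  intro Huv. destruct (Req_EM_T v 0) as [->|Hv].
  - assert (Hu : u <> 0) by tauto. rewrite proj_0; simpl.
    rewrite <- (proj_scale u (m11 q)) by exact Hu. f_equal; ring.
  - rewrite proj_neq0 by exact Hv; simpl.
    rewrite <- (proj_scale (/ v) (m11 q * u + m12 q * v))
      by now apply Rinv_neq_0_compat.
    f_equal; field; exact Hv.
Qed.

Lemma moebius_scale k q x : k <> 0 -> moebius (mat2_scale k q) x = moebius q x.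
Proof.
  intro Hk; destruct q as [a b c d], x as [r|]; simpl.
  - rewrite <- (proj_scale k (a * r + b) (c * r + d)) by exact Hk; f_equal; ring.
  - now rewrite <- (proj_scale k a c).
Qed.

Lemma moebius_mul q1 q2 x : mat2_det q2 <> 0 ->
  moebius q1 (moebius q2 x) = moebius (mat2_mul q1 q2) x.
Proof.
  destruct q1 as [a1 b1 c1 d1], q2 as [a2 b2 c2 d2]; unfold mat2_det; simpl; intro D.
  destruct x as [r|]; simpl; rewrite moebius_proj; simpl.
  - f_equal; ring.
  - intros [H1 H2]; apply D; nra.
  - f_equal; ring.
  - intros [-> ->]; apply D; ring.
Qed.

Lemma mat2_det_mul q1 q2 : mat2_det (mat2_mul q1 q2) = mat2_det q1 * mat2_det q2.
Proof. unfold mat2_det; simpl; ring. Qed.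

Lemma mat2_det_adj q : mat2_det (mat2_adj q) = mat2_det q.
Proof. unfold mat2_det; simpl; ring. Qed.

Lemma mat2_det_mul_neq0 q1 q2 :
  mat2_det q1 <> 0 -> mat2_det q2 <> 0 -> mat2_det (mat2_mul q1 q2) <> 0.
Proof. intros; rewrite mat2_det_mul; now apply Rmult_integral_contrapositive. Qed.

Lemma moebius_adjK q x : mat2_det q <> 0 -> moebius (mat2_adj q) (moebius q x) = x.
Proof.
  intro D. rewrite moebius_mul by exact D.
  replace (mat2_mul (mat2_adj q) q) with (mat2_scale (mat2_det q) (Mat2 1 0 0 1))
    by (unfold mat2_scale, mat2_mul, mat2_det; simpl; f_equal; ring).
  rewrite moebius_scale by exact D.
  destruct x as [r|]; simpl; [rewrite proj_neq0 by lra; f_equal; field | apply proj_0].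
Qed.

Lemma moebius_inj q : mat2_det q <> 0 -> Injective (moebius q).
Proof.
  intros D x y E. now rewrite <- (moebius_adjK q x), <- (moebius_adjK q y), E.
Qed.

Lemma moebius_two_transitive u v : u <> v ->
  exists q, mat2_det q <> 0 /\ moebius q u = None /\ moebius q v = Some 0.
Proof.
  intro Huv; unfold mat2_det.
  destruct u as [a|], v as [b|]; [| | |congruence].
  - assert (a <> b) by congruence.
    exists (Mat2 1 (- b) 1 (- a)); simpl; repeat split; [lra| |].
    + apply proj_eq_None; ring.
    + apply proj_eq_Some; split; [lra|field; lra].
  - exists (Mat2 0 1 1 (- a)); simpl; repeat split; [lra| |].
    + apply proj_eq_None; ring.
    + apply proj_eq_Some; split; [lra|field].
  - exists (Mat2 1 (- b) 0 1); simpl; repeat split; [lra| |].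
    + apply proj_0.
    + apply proj_eq_Some; split; [lra|field].
Qed.

Lemma moebius_fixing_0_inf q :
  moebius q None = None -> moebius q (Some 0) = Some 0 ->
  exists k, forall v, moebius q (Some v) = Some (k * v).
Proof.
  destruct q as [a b c d]; simpl.
  rewrite proj_eq_None, proj_eq_Some; intros -> [Hd Hb].
  replace (0 * 0 + d) with d in * by ring.
  assert (b = 0) by (apply (Rmult_eq_reg_r (/ d)); [lra|now apply Rinv_neq_0_compat]).
  subst b. exists (a / d); intro v. rewrite proj_neq0 by lra. f_equal; field; exact Hd.
Qed.

Lemma moebius_swapping_0_inf q :
  moebius q (Some 0) = None -> moebius q None = Some 0 ->
  exists k, forall v, v <> 0 -> moebius q (Some v) = Some (k / v).
Proof.
  destruct q as [a b c d]; simpl.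
  rewrite proj_eq_None, proj_eq_Some; intros Hd [Hc Ha].
  assert (d = 0) by lra; subst d.
  assert (a = 0) by (apply (Rmult_eq_reg_r (/ c)); [lra|now apply Rinv_neq_0_compat]).
  subst a. exists (b / c); intros v Hv.
  rewrite proj_neq0 by (rewrite Rplus_0_r; now apply Rmult_integral_contrapositive).
  f_equal; field; auto.
Qed.

(** * Classical circles are graphs of Moebius transformations *)

Definition graph (h : S1 -> S1) : pset := fun p => snd p = h (fst p).

Lemma pset_eq_refl C : pset_eq C C.
Proof. intro; tauto. Qed.

Lemma pset_eq_sym C D : pset_eq C D -> pset_eq D C.
Proof. intros H p; specialize (H p); tauto. Qed.

Lemma pset_eq_trans C D E : pset_eq C D -> pset_eq D E -> pset_eq C E.
Proof. intros H1 H2 p; specialize (H1 p); specialize (H2 p); tauto. Qed.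

Lemma graph_ext h1 h2 : (forall x, h1 x = h2 x) -> pset_eq (graph h1) (graph h2).
Proof. intros H [x y]; unfold graph; simpl; now rewrite H. Qed.

Lemma line_curve_moebius s t : pset_eq (line_curve s t) (graph (moebius (Mat2 s t 0 1))).
Proof.
  intros [[x|] [y|]]; unfold graph; simpl; rewrite ?proj_0;
    try (rewrite proj_neq0 by lra); split; try congruence; try tauto.
  - intros ->; f_equal; field.
  - intro H; inversion H; field.
Qed.

Lemma hyperbola_curve_moebius a b c : a <> 0 ->
  pset_eq (hyperbola_curve a b c) (graph (moebius (Mat2 c (a - c * b) 1 (- b)))).
Proof.
  intros Ha [[x|] [y|]]; unfold graph; simpl.
  - destruct (Req_EM_T x b) as [->|Hxb].
    + replace (1 * b + - b) with 0 by ring. rewrite proj_0.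
      split; [intro H; exfalso; apply Ha; rewrite <- H; ring | discriminate].
    + rewrite proj_neq0 by lra. split; intro H.
      * f_equal. apply (Rmult_eq_reg_l (x - b)); [|lra].
        rewrite <- H; field; lra.
      * inversion H; field; lra.
  - destruct (Req_EM_T x b) as [->|Hxb].
    + replace (1 * b + - b) with 0 by ring. rewrite proj_0. tauto.
    + rewrite proj_neq0 by lra. split; [contradiction | discriminate].
  - rewrite proj_neq0 by lra. split; intro H; [subst; f_equal; field | inversion H; field].
  - rewrite proj_neq0 by lra. split; [contradiction | discriminate].
Qed.

Lemma classical_circles_ext C D : classical_circles C -> pset_eq D C -> classical_circles D.
Proof.
  intros [[s [t [Hs E]]] | [a [b [c [Ha E]]]]] HD.
  - left; exists s, t; split; [exact Hs | eapply pset_eq_trans; eauto].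
  - right; exists a, b, c; split; [exact Ha | eapply pset_eq_trans; eauto].
Qed.

Lemma classical_circle_moebius C : classical_circles C ->
  exists q, mat2_det q <> 0 /\ pset_eq C (graph (moebius q)).
Proof.
  unfold mat2_det; intros [[s [t [Hs E]]] | [a [b [c [Ha E]]]]].
  - exists (Mat2 s t 0 1); simpl; split; [lra|].
    eapply pset_eq_trans; [exact E | apply line_curve_moebius].
  - exists (Mat2 c (a - c * b) 1 (- b)); simpl; split; [lra|].
    eapply pset_eq_trans; [exact E | now apply hyperbola_curve_moebius].
Qed.

Lemma moebius_classical_circle q : mat2_det q <> 0 -> classical_circles (graph (moebius q)).
Proof.
  destruct q as [a b c d]; unfold mat2_det; simpl; intro D.
  (* Scaling by [1 / d], resp. [1 / c], gives the matrix of a line, resp. a hyperbola. *)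
  destruct (Req_EM_T c 0) as [->|Hc].
  - assert (Hd : d <> 0) by (intros ->; apply D; ring).
    left; exists (a / d), (b / d); split.
    + apply Rdiv_neq_0; [intros ->; apply D; ring | exact Hd].
    + eapply pset_eq_trans; [| apply pset_eq_sym, line_curve_moebius].
      apply graph_ext; intro x; rewrite <- (moebius_scale (/ d)) by now apply Rinv_neq_0_compat.
      unfold mat2_scale; simpl; f_equal; f_equal; field; exact Hd.
  - right; exists ((b * c - a * d) / (c * c)), (- d / c), (a / c); split.
    + apply Rdiv_neq_0; [intro E; apply D; lra | now apply Rmult_integral_contrapositive].
    + eapply pset_eq_trans; [| apply pset_eq_sym, hyperbola_curve_moebius].
      * apply graph_ext; intro x.
        rewrite <- (moebius_scale (/ c) (Mat2 a b c d)) by now apply Rinv_neq_0_compat.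
        unfold mat2_scale; simpl; f_equal; f_equal; field; exact Hc.
      * apply Rdiv_neq_0; [intro E; apply D; lra | now apply Rmult_integral_contrapositive].
Qed.

(** * Parallelism *)

Definition non_parallel (p q : point) : Prop := fst p <> fst q /\ snd p <> snd q.

Definition joinable (CS : circle_set) (p q : point) : Prop := exists C, CS C /\ C p /\ C q.

Definition parallel_axiom (CS : circle_set) : Prop :=
  forall p q, p <> q -> (joinable CS p q <-> non_parallel p q).

Definition graph_circles (CS : circle_set) : Prop :=
  forall C, CS C -> exists h, Injective h /\ pset_eq C (graph h).

Lemma joinable_sym CS p q : joinable CS p q -> joinable CS q p.
Proof. intros [C [HC [Hp Hq]]]; now exists C. Qed.

Lemma graph_non_parallel h p q : Injective h ->
  graph h p -> graph h q -> p <> q -> non_parallel p q.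
Proof.
  destruct p as [x1 y1], q as [x2 y2]; unfold graph, non_parallel; simpl.
  intros Hi -> -> Hne; split; intro E; apply Hne.
  - now subst.
  - now rewrite (Hi _ _ E).
Qed.

Lemma graph_circles_joinable CS p q : graph_circles CS ->
  joinable CS p q -> p <> q -> non_parallel p q.
Proof.
  intros G [C [HC [Hp Hq]]] Hne. destruct (G C HC) as [h [Hi Hh]].
  apply (graph_non_parallel h); auto; now apply Hh.
Qed.

Lemma classical_graph_circles : graph_circles classical_circles.
Proof.
  intros C HC. destruct (classical_circle_moebius C HC) as [q [D Hq]].
  exists (moebius q); split; [now apply moebius_inj | exact Hq].
Qed.

Lemma classical_parallel_axiom : parallel_axiom classical_circles.
Proof.
  intros p q Hne; split; [intro J; exact (graph_circles_joinable _ p q classical_graph_circles J Hne)|].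
  destruct p as [x1 y1], q as [x2 y2]; unfold non_parallel; simpl; intros [Hx Hy].
  destruct (moebius_two_transitive x1 x2 Hx) as [n [Dn [Hn1 Hn2]]].
  destruct (moebius_two_transitive y1 y2 Hy) as [m [Dm [Hm1 Hm2]]].
  exists (graph (moebius (mat2_mul (mat2_adj m) n))); split.
  - apply moebius_classical_circle, mat2_det_mul_neq0; [now rewrite mat2_det_adj | exact Dn].
  - unfold graph; simpl; rewrite <- !moebius_mul by exact Dn.
    rewrite Hn1, Hn2, <- Hm1, <- Hm2, !moebius_adjK by exact Dm; auto.
Qed.

Definition pos_injective (f : R -> R) : Prop :=
  (forall x, 0 < x -> 0 < f x) /\
  (forall x y, 0 < x -> 0 < y -> f x = f y -> x = y).

Definition fabc_map (f1 f2 : R -> R) (a b c : R) (x : S1) : S1 :=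
  match x with
  | Some r => if Rlt_dec (- b) r then Some (a * f1 (r + b) + c)
              else if Rlt_dec r (- b) then Some (- a * f2 (- r - b) + c) else None
  | None => Some c
  end.

Definition line_map (s t : R) (x : S1) : S1 :=
  match x with Some r => Some (s * r + t) | None => None end.

Lemma fabc_curve_graph f1 f2 a b c :
  pset_eq (fabc_curve f1 f2 a b c) (graph (fabc_map f1 f2 a b c)).
Proof.
  intros [[x|] [y|]]; unfold graph; simpl; [| |split; congruence | split; [tauto|discriminate]].
  - destruct (Rlt_dec (- b) x); [|destruct (Rlt_dec x (- b))].
    + split; [intros [[_ ->]|[]]; [reflexivity|lra] | intro H; inversion H; now left].
    + split; [intros [[]|[_ ->]]; [lra|reflexivity] | intro H; inversion H; now right].
    + split; [intros [[]|[]]; lra | discriminate].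
  - destruct (Rlt_dec (- b) x); [|destruct (Rlt_dec x (- b))];
      split; intro; try discriminate; try reflexivity; lra.
Qed.

Lemma line_curve_graph s t : pset_eq (line_curve s t) (graph (line_map s t)).
Proof.
  intros [[x|] [y|]]; unfold graph; simpl; split; try congruence; tauto.
Qed.

Lemma fabc_map_inj f1 f2 a b c : 0 < a -> pos_injective f1 -> pos_injective f2 ->
  Injective (fabc_map f1 f2 a b c).
Proof.
  intros Ha [P1 I1] [P2 I2].
  assert (A1 : forall r, - b < r -> c < a * f1 (r + b) + c)
    by (intros r Hr; specialize (P1 (r + b)); nra).
  assert (A2 : forall r, r < - b -> - a * f2 (- r - b) + c < c)
    by (intros r Hr; specialize (P2 (- r - b)); nra).
  intros [x|] [y|]; simpl; [| | |reflexivity].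
  - destruct (Rlt_dec (- b) x) as [hx|hx]; [|destruct (Rlt_dec x (- b)) as [hx'|hx']];
    destruct (Rlt_dec (- b) y) as [hy|hy]; try destruct (Rlt_dec y (- b)) as [hy'|hy'];
    intro H; try discriminate; try (inversion H as [E]; clear H);
    try (f_equal; lra);
    try (pose proof (A1 x hx); pose proof (A2 y hy'); lra);
    try (pose proof (A2 x hx'); pose proof (A1 y hy); lra).
    + assert (F : f1 (x + b) = f1 (y + b)) by (apply (Rmult_eq_reg_l a); lra).
      apply I1 in F; [f_equal|..]; lra.
    + assert (F : f2 (- x - b) = f2 (- y - b)) by (apply (Rmult_eq_reg_l a); lra).
      apply I2 in F; [f_equal|..]; lra.
  - destruct (Rlt_dec (- b) x) as [hx|hx]; [|destruct (Rlt_dec x (- b)) as [hx'|hx']];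
      intro H; try discriminate; inversion H as [E];
      [pose proof (A1 x hx) | pose proof (A2 x hx')]; lra.
  - destruct (Rlt_dec (- b) y) as [hy|hy]; [|destruct (Rlt_dec y (- b)) as [hy'|hy']];
      intro H; try discriminate; inversion H as [E];
      [pose proof (A1 y hy) | pose proof (A2 y hy')]; lra.
Qed.

Lemma line_map_inj s t : s <> 0 -> Injective (line_map s t).
Proof.
  intros Hs [x|] [y|]; simpl; intro H; inversion H as [E]; auto.
  f_equal; apply (Rmult_eq_reg_l s); lra.
Qed.

Lemma negS1_involutive x : negS1 (negS1 x) = x.
Proof. destruct x; simpl; [now rewrite Ropp_involutive | reflexivity]. Qed.

Lemma phi_involutive p : phi (phi p) = p.
Proof. destruct p; unfold phi; simpl; now rewrite negS1_involutive. Qed.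

Lemma image_phi C : pset_eq (image phi C) (fun p => C (phi p)).
Proof.
  intro p; split.
  - intros [q [Hq ->]]; now rewrite phi_involutive.
  - intro H; exists (phi p); now rewrite phi_involutive.
Qed.

Lemma image_phi_ext C D : pset_eq C D -> pset_eq (image phi C) (image phi D).
Proof. intros H p; split; intros [q [Hq ->]]; exists q; split; auto; now apply H. Qed.

Lemma image_phi_line_curve s t : pset_eq (image phi (line_curve s t)) (line_curve (- s) t).
Proof.
  eapply pset_eq_trans; [apply image_phi|].
  intros [[x|] [y|]]; unfold phi; simpl; try tauto.
  split; intros ->; ring.
Qed.

Lemma image_phi_graph h : pset_eq (image phi (graph h)) (graph (fun x => h (negS1 x))).
Proof. eapply pset_eq_trans; [apply image_phi|]; intros [x y]; unfold graph, phi; tauto. Qed.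

Lemma Cminus_graph_circles f1 f2 : pos_injective f1 -> pos_injective f2 ->
  graph_circles (Defs.Cminus f1 f2).
Proof.
  intros G1 G2 C [[a [b [c [Ha E]]]] | [s [t [Hs E]]]].
  - exists (fabc_map f1 f2 a b c); split; [now apply fabc_map_inj|].
    eapply pset_eq_trans; [exact E | apply fabc_curve_graph].
  - exists (line_map s t); split; [apply line_map_inj; lra|].
    eapply pset_eq_trans; [exact E | apply line_curve_graph].
Qed.

Lemma M_graph_circles f1 f2 f3 f4 :
  pos_injective f1 -> pos_injective f2 -> pos_injective f3 -> pos_injective f4 ->
  graph_circles (M_circles f1 f2 f3 f4).
Proof.
  intros G1 G2 G3 G4 C [HC | [D [HD E]]]; [now apply (Cminus_graph_circles f1 f2)|].
  destruct (Cminus_graph_circles f3 f4 G3 G4 D HD) as [h [Hi Hh]].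
  exists (fun x => h (negS1 x)); split.
  - intros x y Hxy; apply Hi in Hxy.
    now rewrite <- (negS1_involutive x), <- (negS1_involutive y), Hxy.
  - eapply pset_eq_trans; [exact E|].
    eapply pset_eq_trans; [apply image_phi_ext, Hh | apply image_phi_graph].
Qed.

Section PlaneM.

Variables f1 f2 f3 f4 : R -> R.
Let MC := M_circles f1 f2 f3 f4.

Lemma fabc_curve_M a b c : 0 < a -> MC (fabc_curve f1 f2 a b c).
Proof. intro Ha; left; left; exists a, b, c; split; [exact Ha | apply pset_eq_refl]. Qed.

Lemma image_phi_Cminus_M C : Defs.Cminus f3 f4 C -> MC (image phi C).
Proof. intro HC; right; exists C; split; [exact HC | apply pset_eq_refl]. Qed.

Lemma line_curve_M s t : s <> 0 -> MC (line_curve s t).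
Proof.
  intro Hs; destruct (Rlt_dec s 0) as [Hn|Hp].
  - left; right; exists s, t; split; [exact Hn | apply pset_eq_refl].
  - right; exists (line_curve (- s) t); split.
    + right; exists (- s), t; split; [lra | apply pset_eq_refl].
    + rewrite <- (Ropp_involutive s) at 1; apply pset_eq_sym, image_phi_line_curve.
Qed.

Hypothesis f1_pos : forall x, 0 < x -> 0 < f1 x.
Hypothesis f2_pos : forall x, 0 < x -> 0 < f2 x.

Lemma M_joinable_non_parallel p q : non_parallel p q -> joinable MC p q.
Proof.
  assert (L : forall s t p q, s <> 0 -> line_curve s t p -> line_curve s t q -> joinable MC p q)
    by (intros s t p' q' Hs Hp Hq; exists (line_curve s t); auto using line_curve_M).
  assert (F : forall a b c p q, 0 < a ->
             fabc_curve f1 f2 a b c p -> fabc_curve f1 f2 a b c q -> joinable MC p q)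
    by (intros a b c p' q' Ha Hp Hq; exists (fabc_curve f1 f2 a b c); auto using fabc_curve_M).
  assert (NF_FF : forall y1 x2 y2, y1 <> y2 -> joinable MC (None, Some y1) (Some x2, Some y2)).
  { intros y1 x2 y2 Hy. pose proof (f1_pos 1 Rlt_0_1). pose proof (f2_pos 1 Rlt_0_1).
    destruct (Rlt_dec y1 y2).
    - apply (F ((y2 - y1) / f1 1) (1 - x2) y1); simpl; auto.
      + apply Rdiv_lt_0_compat; lra.
      + left; split; [lra|]. replace (x2 + (1 - x2)) with 1 by ring. field; lra.
    - apply (F ((y1 - y2) / f2 1) (-1 - x2) y1); simpl; auto.
      + apply Rdiv_lt_0_compat; lra.
      + right; split; [lra|]. replace (- x2 - (-1 - x2)) with 1 by ring. field; lra. }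
  assert (FN_FF : forall x1 x2 y2, x1 <> x2 -> joinable MC (Some x1, None) (Some x2, Some y2)).
  { intros x1 x2 y2 Hx. destruct (Rlt_dec x1 x2).
    - apply (F 1 (- x1) (y2 - f1 (x2 - x1))); simpl; [lra | ring |].
      left; split; [lra|]. replace (x2 + - x1) with (x2 - x1) by ring; ring.
    - apply (F 1 (- x1) (y2 + f2 (x1 - x2))); simpl; [lra | ring |].
      right; split; [lra|]. replace (- x2 - - x1) with (x1 - x2) by ring; ring. }
  destruct p as [[x1|] [y1|]], q as [[x2|] [y2|]]; unfold non_parallel; simpl;
    intros [Hx Hy]; try congruence.
  - assert (x1 <> x2) by congruence; assert (y1 <> y2) by congruence.
    set (m := (y2 - y1) / (x2 - x1)).
    assert (Hm : y2 - y1 = m * (x2 - x1)) by (unfold m; field; lra).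
    apply (L m (y1 - m * x1)); simpl; [intro E; rewrite E in Hm; lra | ring | lra].
  - apply joinable_sym, FN_FF; congruence.
  - apply joinable_sym, NF_FF; congruence.
  - apply joinable_sym, (L (-1) (y1 + x1)); simpl; auto; lra.
  - apply FN_FF; congruence.
  - apply (F 1 (- x1) y2); simpl; auto; lra.
  - apply NF_FF; congruence.
  - apply (F 1 (- x2) y1); simpl; auto; lra.
  - apply (L (-1) (y2 + x2)); simpl; auto; lra.
Qed.

End PlaneM.

Lemma M_parallel_axiom f1 f2 f3 f4 :
  pos_injective f1 -> pos_injective f2 -> pos_injective f3 -> pos_injective f4 ->
  parallel_axiom (M_circles f1 f2 f3 f4).
Proof.
  intros G1 G2 G3 G4 p q Hne; split.
  - intro J; exact (graph_circles_joinable _ p q (M_graph_circles _ _ _ _ G1 G2 G3 G4) J Hne).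
  - apply M_joinable_non_parallel; [apply G1 | apply G2].
Qed.

(** * Bijections preserving parallelism *)

Definition vertical (p q : point) : Prop := fst p = fst q.
Definition horizontal (p q : point) : Prop := snd p = snd q.

Definition preserves_non_parallel (s : point -> point) : Prop :=
  forall p q, non_parallel p q <-> non_parallel (s p) (s q).

Lemma vertical_horizontal_eq p q : vertical p q -> horizontal p q -> p = q.
Proof. destruct p, q; unfold vertical, horizontal; simpl; now intros -> ->. Qed.

Lemma other_point_on_vertical p : exists q, vertical p q /\ ~ horizontal p q.
Proof.
  destruct p as [x [y|]]; unfold vertical, horizontal.
  - exists (x, None); simpl; split; [reflexivity | discriminate].
  - exists (x, Some 0); simpl; split; [reflexivity | discriminate].
Qed.

Section ParallelismPreserving.

Variable s : point -> point.
Hypothesis s_non_parallel : preserves_non_parallel s.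

Lemma parallel_image p q : vertical p q \/ horizontal p q ->
  vertical (s p) (s q) \/ horizontal (s p) (s q).
Proof.
  intro Hpq; apply NNPP; intro N.
  assert (non_parallel (s p) (s q)) as Hs by (unfold non_parallel; tauto).
  apply s_non_parallel in Hs; unfold non_parallel in Hs; tauto.
Qed.

Definition keeps_vertical (p : point) : Prop :=
  forall q, vertical p q -> vertical (s p) (s q).

Lemma keeps_vertical_horizontal p r : keeps_vertical p -> horizontal p r ->
  horizontal (s p) (s r).
Proof.
  intros Kp Hpr.
  destruct (classic (r = p)) as [->|Hrp]; [reflexivity|].
  destruct (parallel_image p r (or_intror Hpr)) as [Vpr|]; [exfalso|assumption].
  destruct (other_point_on_vertical p) as [q [Vpq Hpq]].
  assert (non_parallel q r) as Nqr.
  { unfold vertical, horizontal, non_parallel in *; split; [|congruence].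
    intro E; apply Hrp, vertical_horizontal_eq; unfold vertical, horizontal; congruence. }
  apply s_non_parallel in Nqr; apply (proj1 Nqr).
  pose proof (Kp q Vpq); unfold vertical in *; congruence.
Qed.

Lemma keeps_vertical_along_vertical p q : keeps_vertical p -> vertical p q -> keeps_vertical q.
Proof.
  intros Kp Vpq r Vqr.
  assert (Vpr : vertical p r) by (unfold vertical in *; congruence).
  pose proof (Kp q Vpq); pose proof (Kp r Vpr); unfold vertical in *; congruence.
Qed.

Lemma keeps_vertical_along_horizontal p r : keeps_vertical p -> horizontal p r ->
  keeps_vertical r.
Proof.
  intros Kp Hpr q Vrq.
  destruct (classic (r = q)) as [<-|Hrq]; [reflexivity|].
  destruct (classic (vertical p q)) as [Vpq|nVpq].
  - replace r with p; [exact (Kp q Vpq)|].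
    apply vertical_horizontal_eq; unfold vertical, horizontal in *; congruence.
  - destruct (parallel_image r q (or_introl Vrq)) as [|Hsrq]; [assumption|exfalso].
    assert (non_parallel p q) as Npq.
    { split; [exact nVpq|]. intro E; apply Hrq, vertical_horizontal_eq;
        unfold vertical, horizontal in *; congruence. }
    apply s_non_parallel in Npq; apply (proj2 Npq).
    pose proof (keeps_vertical_horizontal p r Kp Hpr); unfold horizontal in *; congruence.
Qed.

Lemma keeps_vertical_everywhere : keeps_vertical (None, None) -> forall p, keeps_vertical p.
Proof.
  intros K0 [x y].
  apply (keeps_vertical_along_horizontal (None, y)); [|reflexivity].
  now apply (keeps_vertical_along_vertical (None, None)).
Qed.

Lemma product_of_keeps_vertical : keeps_vertical (None, None) ->
  exists alpha beta : S1 -> S1, forall x y, s (x, y) = (alpha x, beta y).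
Proof.
  intro K0; pose proof (keeps_vertical_everywhere K0) as K.
  exists (fun x => fst (s (x, None))), (fun y => snd (s (None, y))); intros x y.
  rewrite (surjective_pairing (s (x, y))); f_equal.
  - now apply (K (x, y) (x, None)).
  - now apply (keeps_vertical_horizontal (x, y) (None, y)).
Qed.

Lemma horizontal_of_not_keeps_vertical : ~ keeps_vertical (None, None) ->
  forall q, vertical (None, None) q -> horizontal (s (None, None)) (s q).
Proof.
  intros nK q Vq.
  destruct (not_all_ex_not _ _ nK) as [q0 nK0].
  destruct (imply_to_and _ _ nK0) as [Vq0 nVs0].
  assert (horizontal (s (None, None)) (s q0))
    by (destruct (parallel_image _ _ (or_introl Vq0)); tauto).
  assert (Vqq0 : vertical q q0) by (unfold vertical in *; simpl in *; congruence).
  destruct (parallel_image q q0 (or_introl Vqq0)).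
  - destruct (parallel_image _ _ (or_introl Vq)); [exfalso | assumption].
    apply nVs0; unfold vertical in *; congruence.
  - unfold horizontal in *; congruence.
Qed.

End ParallelismPreserving.

Definition swap (p : point) : point := (snd p, fst p).

Lemma product_or_swap s : preserves_non_parallel s ->
  (exists alpha beta : S1 -> S1, forall x y, s (x, y) = (alpha x, beta y)) \/
  (exists alpha beta : S1 -> S1, forall x y, s (x, y) = (beta y, alpha x)).
Proof.
  intro Hs; destruct (classic (keeps_vertical s (None, None))) as [K|nK].
  - left; now apply product_of_keeps_vertical.
  - right.
    assert (Hs' : preserves_non_parallel (fun p => swap (s p)))
      by (intros p q; rewrite (Hs p q); unfold non_parallel, swap; simpl; tauto).
    destruct (product_of_keeps_vertical (fun p => swap (s p)) Hs') as [alpha [beta E]].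
    { intros q Vq; exact (horizontal_of_not_keeps_vertical s Hs nK q Vq). }
    exists alpha, beta; intros x y; specialize (E x y); unfold swap in E.
    rewrite (surjective_pairing (s (x, y))); now inversion E.
Qed.

(** * Conjugating circles to Moebius transformations *)

Definition circle_map (CS : circle_set) (h : S1 -> S1) : Prop :=
  exists C, CS C /\ forall x, C (x, h x).

Definition moebius_conjugating (CS : circle_set) (g : S1 -> S1) : Prop :=
  forall h, circle_map CS h ->
    exists q, mat2_det q <> 0 /\ forall x, g (h x) = moebius q (g x).

Lemma circle_map_ext CS h1 h2 : (forall x, h1 x = h2 x) ->
  circle_map CS h1 -> circle_map CS h2.
Proof. intros E [C [HC Hh]]; exists C; split; [exact HC | intro x; now rewrite <- E]. Qed.

Lemma isomorphism_preserves_non_parallel CS1 CS2 s :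
  parallel_axiom CS1 -> parallel_axiom CS2 -> Injective s ->
  (forall C, CS1 C -> CS2 (image s C)) ->
  (forall D, CS2 D -> exists C, CS1 C /\ pset_eq D (image s C)) ->
  preserves_non_parallel s.
Proof.
  intros A1 A2 Hi Hf Hb p q.
  destruct (classic (p = q)) as [<-|Hne]; [unfold non_parallel; tauto|].
  assert (Hne' : s p <> s q) by (intro E; now apply Hne, Hi).
  rewrite <- (A1 p q Hne), <- (A2 _ _ Hne'); split.
  - intros [C [HC [Hp Hq]]]; exists (image s C); split; [now apply Hf|].
    split; [now exists p | now exists q].
  - intros [D [HD [Hp Hq]]]; destruct (Hb D HD) as [C [HC E]].
    apply E in Hp as [p' [Hp' Ep]]; apply E in Hq as [q' [Hq' Eq]].
    apply Hi in Ep; apply Hi in Eq; subst; now exists C.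
Qed.

Lemma isomorphic_classical_conjugating CS :
  parallel_axiom CS -> circle_map CS (fun x => x) -> isomorphic CS classical_circles ->
  exists g, Injective g /\ moebius_conjugating CS g.
Proof.
  intros A Hid [s [[Hi _] [Hf Hb]]].
  assert (Hs : preserves_non_parallel s)
    by (apply (isomorphism_preserves_non_parallel CS classical_circles);
        auto using classical_parallel_axiom).
  assert (Img : forall h, circle_map CS h -> exists q, mat2_det q <> 0 /\
            forall x, snd (s (x, h x)) = moebius q (fst (s (x, h x))))
    by (intros h [C [HC Hh]];
        destruct (classical_circle_moebius _ (Hf C HC)) as [q [Dq Hq]];
        exists q; split; [exact Dq | intro x; apply (Hq (s (x, h x))); now exists (x, h x)]).
  (* The diagonal circle y = x ties the two factors together through [q1]. *)
  destruct (Img _ Hid) as [q1 [D1 H1]].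
  destruct (product_or_swap s Hs) as [[alpha [beta E]] | [alpha [beta E]]].
  - exists alpha; split.
    + intros x y Exy. assert (Es : s (x, None) = s (y, None)) by now rewrite !E, Exy.
      apply Hi in Es; now inversion Es.
    + intros h Hh; destruct (Img h Hh) as [q [Dq Hq]].
      exists (mat2_mul (mat2_adj q1) q); split.
      * apply mat2_det_mul_neq0; [now rewrite mat2_det_adj | exact Dq].
      * intro x; specialize (Hq x); specialize (H1 (h x)); rewrite E in Hq, H1; simpl in *.
        now rewrite <- moebius_mul, <- Hq, H1, moebius_adjK.
  - exists beta; split.
    + intros x y Exy. assert (Es : s (None, x) = s (None, y)) by now rewrite !E, Exy.
      apply Hi in Es; now inversion Es.
    + intros h Hh; destruct (Img h Hh) as [q [Dq Hq]].
      exists (mat2_mul (mat2_adj q) q1); split.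
      * apply mat2_det_mul_neq0; [now rewrite mat2_det_adj | exact D1].
      * intro x; specialize (Hq x); specialize (H1 x); rewrite E in Hq, H1; simpl in *.
        now rewrite <- moebius_mul, <- H1, Hq, moebius_adjK.
Qed.

Lemma moebius_conjugating_ext CS g1 g2 : (forall x, g1 x = g2 x) ->
  moebius_conjugating CS g1 -> moebius_conjugating CS g2.
Proof.
  intros E Hg h Hh; destruct (Hg h Hh) as [q [Dq Hq]].
  exists q; split; [exact Dq | intro x; now rewrite <- !E].
Qed.

Lemma moebius_conjugating_comp CS g n : mat2_det n <> 0 ->
  moebius_conjugating CS g -> moebius_conjugating CS (fun x => moebius n (g x)).
Proof.
  intros Dn Hg h Hh; destruct (Hg h Hh) as [q [Dq Hq]].
  assert (Dn' : mat2_det (mat2_adj n) <> 0) by now rewrite mat2_det_adj.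
  assert (Dqn : mat2_det (mat2_mul q (mat2_adj n)) <> 0) by now apply mat2_det_mul_neq0.
  exists (mat2_mul n (mat2_mul q (mat2_adj n))); split; [now apply mat2_det_mul_neq0|].
  intro x; now rewrite Hq, <- moebius_mul, <- moebius_mul, moebius_adjK.
Qed.

Definition lift (d : R -> R) (x : S1) : S1 :=
  match x with Some r => Some (d r) | None => None end.

Lemma moebius_conjugating_normalize CS g : Injective g -> moebius_conjugating CS g ->
  exists d, Injective d /\ d 0 = 0 /\ moebius_conjugating CS (lift d).
Proof.
  intros Hi Hg.
  destruct (moebius_two_transitive (g None) (g (Some 0))) as [n [Dn [N1 N2]]].
  { intro E; apply Hi in E; discriminate. }
  set (g' := fun x => moebius n (g x)).
  assert (Hi' : Injective g') by (intros x y E; now apply Hi, (moebius_inj n Dn)).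
  set (d := fun r => match g' (Some r) with Some v => v | None => 0 end).
  assert (Hd : forall x, lift d x = g' x).
  { intros [r|]; simpl; [|now unfold g'; rewrite N1].
    unfold d; destruct (g' (Some r)) as [v|] eqn:Er; [reflexivity|].
    assert (g' (Some r) = g' None) as E by (rewrite Er; unfold g'; now rewrite N1).
    apply Hi' in E; discriminate. }
  exists d; split; [|split].
  - intros r r' E. assert (E' : g' (Some r) = g' (Some r')) by now rewrite <- !Hd; simpl; rewrite E.
    apply Hi' in E'; now inversion E'.
  - pose proof (Hd (Some 0)) as H0; unfold g' in H0; rewrite N2 in H0; simpl in H0.
    now injection H0.
  - apply (moebius_conjugating_ext CS g'); [intro x; now rewrite Hd|].
    now apply moebius_conjugating_comp.
Qed.

Lemma fabc_map_pos f g y : 0 < y -> fabc_map f g 1 0 0 (Some y) = Some (f y).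
Proof.
  intro Hy; simpl; destruct (Rlt_dec (- 0) y); [|lra]. f_equal; replace (y + 0) with y by ring; ring.
Qed.

Lemma fabc_map_neg f g y : 0 < y -> fabc_map f g 1 0 0 (Some (- y)) = Some (- g y).
Proof.
  intro Hy; simpl; destruct (Rlt_dec (- 0) (- y)); [lra|].
  destruct (Rlt_dec (- y) (- 0)); [|lra]. f_equal; replace (- - y - 0) with y by ring; ring.
Qed.

Lemma fabc_map_0 f g : fabc_map f g 1 0 0 (Some 0) = None.
Proof. simpl; destruct (Rlt_dec (- 0) 0); [lra|]; destruct (Rlt_dec 0 (- 0)); [lra|reflexivity]. Qed.

Section PlaneMCircleMaps.

Variables f1 f2 f3 f4 : R -> R.
Let MC := M_circles f1 f2 f3 f4.

Lemma line_map_circle_map s t : s <> 0 -> circle_map MC (line_map s t).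
Proof.
  intro Hs; exists (line_curve s t); split; [now apply line_curve_M|].
  intro x; now apply line_curve_graph.
Qed.

Lemma id_circle_map : circle_map MC (fun x => x).
Proof.
  apply (circle_map_ext _ (line_map 1 0)); [|apply line_map_circle_map; lra].
  intros [r|]; simpl; [f_equal; ring | reflexivity].
Qed.

Lemma fabc_map_circle_map a b c : 0 < a -> circle_map MC (fabc_map f1 f2 a b c).
Proof.
  intro Ha; exists (fabc_curve f1 f2 a b c); split; [now apply fabc_curve_M|].
  intro x; now apply fabc_curve_graph.
Qed.

Lemma phi_fabc_map_circle_map a b c : 0 < a ->
  circle_map MC (fun x => fabc_map f3 f4 a b c (negS1 x)).
Proof.
  intro Ha; exists (image phi (fabc_curve f3 f4 a b c)); split.
  - apply image_phi_Cminus_M; left; exists a, b, c; split; [exact Ha | apply pset_eq_refl].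
  - intro x; apply image_phi, fabc_curve_graph; reflexivity.
Qed.

End PlaneMCircleMaps.

Definition conjugates_to_inversion (d : R -> R) (h : S1 -> S1) (k : R) : Prop :=
  forall r t, r <> 0 -> h (Some r) = Some t -> d t * d r = k.

Section NormalizedConjugation.

Variable CS : circle_set.
Variable d : R -> R.
Hypothesis d_inj : Injective d.
Hypothesis d_0 : d 0 = 0.
Hypothesis d_conj : moebius_conjugating CS (lift d).

Lemma conjugate_fixing_0_inf h : circle_map CS h -> h None = None -> h (Some 0) = Some 0 ->
  exists k, forall r t, h (Some r) = Some t -> d t = k * d r.
Proof.
  intros Hh Hinf H0; destruct (d_conj h Hh) as [q [_ Hq]].
  destruct (moebius_fixing_0_inf q) as [k Hk].
  - specialize (Hq None); rewrite Hinf in Hq; now symmetry.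
  - specialize (Hq (Some 0)); rewrite H0 in Hq; cbn [lift] in Hq; rewrite d_0 in Hq; now symmetry.
  - exists k; intros r t E; specialize (Hq (Some r)); rewrite E in Hq; cbn [lift] in Hq.
    rewrite Hk in Hq; now injection Hq.
Qed.

Lemma conjugate_swapping_0_inf h : circle_map CS h -> h None = Some 0 -> h (Some 0) = None ->
  exists k, conjugates_to_inversion d h k.
Proof.
  intros Hh Hinf H0; destruct (d_conj h Hh) as [q [_ Hq]].
  destruct (moebius_swapping_0_inf q) as [k Hk].
  - specialize (Hq (Some 0)); rewrite H0 in Hq; cbn [lift] in Hq; rewrite d_0 in Hq; now symmetry.
  - specialize (Hq None); rewrite Hinf in Hq; cbn [lift] in Hq; rewrite d_0 in Hq; now symmetry.
  - exists k; intros r t Hr E.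
    assert (Dr : d r <> 0) by (rewrite <- d_0; intro F; now apply Hr, d_inj).
    specialize (Hq (Some r)); rewrite E in Hq; cbn [lift] in Hq; rewrite (Hk _ Dr) in Hq.
    injection Hq as ->; field; exact Dr.
Qed.

End NormalizedConjugation.

(** * The reciprocal functional equation *)

Section ReciprocalEquation.

Variable d : R -> R.
Hypothesis d_inj : Injective d.
Hypothesis d_0 : d 0 = 0.
Hypothesis d_dilation : forall l, l <> 0 -> exists k, forall r, d (l * r) = k * d r.

Lemma d_neq0 r : r <> 0 -> d r <> 0.
Proof. intros Hr E; rewrite <- d_0 in E; now apply Hr, d_inj. Qed.

Lemma d_mul l r : d (l * r) * d 1 = d l * d r.
Proof.
  destruct (Req_EM_T l 0) as [->|Hl]; [rewrite Rmult_0_l, d_0; ring|].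
  destruct (d_dilation l Hl) as [k Hk].
  pose proof (Hk 1) as H1; rewrite Rmult_1_r in H1.
  rewrite Hk, H1; ring.
Qed.

Lemma d_opp r : d (- r) = - d r.
Proof.
  assert (D1 : d 1 <> 0) by (apply d_neq0; lra).
  assert (Dm1 : d (-1) = - d 1).
  { pose proof (d_mul (-1) (-1)) as H; replace (-1 * -1) with 1 in H by ring.
    assert (d (-1) <> d 1) by (intro E; apply d_inj in E; lra).
    assert ((d (-1) - d 1) * (d (-1) + d 1) = 0) as E by nra.
    apply Rmult_integral in E; lra. }
  pose proof (d_mul (-1) r) as H; replace (-1 * r) with (- r) in H by ring.
  rewrite Dm1 in H; apply (Rmult_eq_reg_r (d 1)); [lra | exact D1].
Qed.

Lemma d_reciprocal y z : y <> 0 -> d z * d y = d 1 * d 1 -> z = 1 / y.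
Proof.
  intros Hy E; apply d_inj, (Rmult_eq_reg_r (d y)); [|now apply d_neq0].
  rewrite E, (Rmult_comm (d (1 / y))), <- (d_mul y (1 / y)).
  now replace (y * (1 / y)) with 1 by (field; exact Hy).
Qed.

Lemma conjugates_to_inversion_negS1 h k :
  conjugates_to_inversion d (fun x => h (negS1 x)) k -> conjugates_to_inversion d h (- k).
Proof.
  intros Hh r t Hr E.
  assert (E' : h (negS1 (Some (- r))) = Some t) by (simpl; now rewrite Ropp_involutive).
  specialize (Hh (- r) t ltac:(lra) E'); rewrite d_opp in Hh; lra.
Qed.

Lemma conjugates_to_inversion_fabc_map f g k :
  conjugates_to_inversion d (fabc_map f g 1 0 0) k ->
  forall y, 0 < y -> d (f y) * d y = k /\ d (g y) * d y = k.
Proof.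
  intros Hk y Hy; split.
  - apply Hk; [lra | now apply fabc_map_pos].
  - pose proof (Hk (- y) (- g y) ltac:(lra) (fabc_map_neg f g y Hy)) as H.
    rewrite !d_opp in H; lra.
Qed.

Lemma reciprocal_of_inversion f g k :
  (forall y, 0 < y -> d (f y) * d y = k /\ d (g y) * d y = k) -> f 1 = 1 ->
  forall y, 0 < y -> f y = 1 / y /\ g y = 1 / y.
Proof.
  intros Hk F1 y Hy.
  assert (K : k = d 1 * d 1) by (destruct (Hk 1 Rlt_0_1) as [H _]; now rewrite F1 in H).
  destruct (Hk y Hy) as [Hf Hg]; rewrite K in Hf, Hg.
  split; apply d_reciprocal; auto; lra.
Qed.

End ReciprocalEquation.

Lemma M_reciprocal_of_isomorphic f1 f2 f3 f4 :
  pos_injective f1 -> pos_injective f2 -> pos_injective f3 -> pos_injective f4 ->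
  f1 1 = 1 -> f3 1 = 1 -> isomorphic (M_circles f1 f2 f3 f4) classical_circles ->
  forall y, 0 < y -> f1 y = 1 / y /\ f2 y = 1 / y /\ f3 y = 1 / y /\ f4 y = 1 / y.
Proof.
  intros G1 G2 G3 G4 F1 F3 Hiso.
  set (MC := M_circles f1 f2 f3 f4).
  destruct (isomorphic_classical_conjugating MC) as [g [Hg Cg]];
    [now apply M_parallel_axiom | apply id_circle_map | exact Hiso |].
  destruct (moebius_conjugating_normalize MC g Hg Cg) as [d [Hd [D0 Cd]]].
  assert (Dil : forall l, l <> 0 -> exists k, forall r, d (l * r) = k * d r).
  { intros l Hl.
    destruct (conjugate_fixing_0_inf MC d D0 Cd (line_map l 0)) as [k Hk];
      [now apply line_map_circle_map | reflexivity | simpl; f_equal; ring |].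
    exists k; intro r; apply Hk; simpl; f_equal; ring. }
  destruct (conjugate_swapping_0_inf MC d Hd D0 Cd (fabc_map f1 f2 1 0 0)) as [k12 H12];
    [apply fabc_map_circle_map; lra | reflexivity | apply fabc_map_0 |].
  destruct (conjugate_swapping_0_inf MC d Hd D0 Cd (fun x => fabc_map f3 f4 1 0 0 (negS1 x)))
    as [k34 H34];
    [apply phi_fabc_map_circle_map; lra | reflexivity | cbn [negS1]; rewrite Ropp_0; apply fabc_map_0 |].
  apply (conjugates_to_inversion_negS1 d Hd D0 Dil) in H34.
  pose proof (conjugates_to_inversion_fabc_map d Hd D0 Dil _ _ _ H12) as R12.
  pose proof (conjugates_to_inversion_fabc_map d Hd D0 Dil _ _ _ H34) as R34.
  intros y Hy.
  destruct (reciprocal_of_inversion d Hd D0 Dil f1 f2 k12 R12 F1 y Hy).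
  destruct (reciprocal_of_inversion d Hd D0 Dil f3 f4 (- k34) R34 F3 y Hy).
  tauto.
Qed.

Lemma strictly_convex_pos_tie f x y z : strictly_convex_pos f ->
  0 < x -> x < y -> y < z -> f x = f y -> f y < f z.
Proof.
  intros Hc Hx Hxy Hyz E.
  set (t := (z - y) / (z - x)).
  assert (Ht : 0 < t < 1).
  { unfold t; split; [apply Rdiv_lt_0_compat; lra|].
    apply (Rmult_lt_reg_r (z - x)); [lra|]. field_simplify; lra. }
  pose proof (Hc x z t Hx ltac:(lra) ltac:(lra) Ht) as H.
  replace (t * x + (1 - t) * z) with y in H by (unfold t; field; lra).
  rewrite E in H; apply (Rmult_lt_reg_l (1 - t)); nra.
Qed.

Lemma strongly_hyperbolic_pos_injective f : strongly_hyperbolic f -> pos_injective f.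
Proof.
  intros [Hpos [_ [Hlim [Hconv _]]]]; split; [exact Hpos|].
  assert (Tie : forall x y, 0 < x -> x < y -> f x <> f y).
  { intros x y Hx Hxy E.
    pose proof (Hpos y ltac:(lra)) as Py.
    apply filterlim_locally with (eps := mkposreal _ Py) in Hlim as [M HM].
    set (z := Rmax M y + 1).
    assert (M < z /\ y < z) as [Mz yz] by (unfold z; split; [pose proof (Rmax_l M y) | pose proof (Rmax_r M y)]; lra).
    specialize (HM z Mz); change (Rabs (f z - 0) < f y) in HM.
    rewrite Rminus_0_r in HM; apply Rabs_def2 in HM.
    pose proof (strictly_convex_pos_tie f x y z Hconv Hx Hxy yz E); lra. }
  intros x y Hx Hy E; destruct (Rtotal_order x y) as [Hl|[Heq|Hg]].
  - now exfalso; apply (Tie x y).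
  - exact Heq.
  - now exfalso; apply (Tie y x).
Qed.

Lemma fabc_curve_reciprocal g1 g2 a b c :
  (forall x, 0 < x -> g1 x = 1 / x) -> (forall x, 0 < x -> g2 x = 1 / x) -> 0 < a ->
  pset_eq (fabc_curve g1 g2 a b c) (hyperbola_curve a (- b) c).
Proof.
  intros E1 E2 Ha [[x|] [y|]]; simpl; [| lra | tauto | tauto].
  split.
  - intros [[Hx ->]|[Hx ->]]; [rewrite E1 | rewrite E2]; try lra; field; lra.
  - intro H; destruct (Rtotal_order (- b) x) as [Hx|[<-|Hx]].
    + left; split; [exact Hx|]; rewrite E1 by lra.
      apply (Rmult_eq_reg_l (x + b)); [|lra]. rewrite <- H; field; lra.
    + exfalso; replace (- b - - b) with 0 in H by ring; lra.
    + right; split; [exact Hx|]; rewrite E2 by lra.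
      apply (Rmult_eq_reg_l (x + b)); [|lra]. rewrite <- H; field; lra.
Qed.

Lemma image_phi_hyperbola_curve a b c :
  pset_eq (image phi (hyperbola_curve a b c)) (hyperbola_curve (- a) (- b) c).
Proof.
  eapply pset_eq_trans; [apply image_phi|].
  intros [[x|] [y|]]; unfold phi; simpl; try tauto; lra.
Qed.

Lemma M_circles_ext f1 f2 f3 f4 C D :
  M_circles f1 f2 f3 f4 C -> pset_eq D C -> M_circles f1 f2 f3 f4 D.
Proof.
  intros [[[a [b [c [Ha E]]]] | [s [t [Hs E]]]] | [C' [HC' E]]] HD.
  - left; left; exists a, b, c; split; [exact Ha | eapply pset_eq_trans; eauto].
  - left; right; exists s, t; split; [exact Hs | eapply pset_eq_trans; eauto].
  - right; exists C'; split; [exact HC' | eapply pset_eq_trans; eauto].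
Qed.

Lemma M_circles_reciprocal f1 f2 f3 f4 :
  (forall x, 0 < x -> f1 x = 1 / x) -> (forall x, 0 < x -> f2 x = 1 / x) ->
  (forall x, 0 < x -> f3 x = 1 / x) -> (forall x, 0 < x -> f4 x = 1 / x) ->
  forall C, M_circles f1 f2 f3 f4 C <-> classical_circles C.
Proof.
  intros E1 E2 E3 E4 C; split.
  - intros [[[a [b [c [Ha E]]]] | [s [t [Hs E]]]] | [D [[[a [b [c [Ha E]]]] | [s [t [Hs E]]]] HC]]].
    + right; exists a, (- b), c; split; [lra|].
      eapply pset_eq_trans; [exact E | now apply fabc_curve_reciprocal].
    + left; exists s, t; split; [lra | exact E].
    + right; exists (- a), (- - b), c; split; [lra|].
      eapply pset_eq_trans; [exact HC|].
      eapply pset_eq_trans; [apply image_phi_ext, (pset_eq_trans _ _ _ E)|];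
        [now apply fabc_curve_reciprocal | apply image_phi_hyperbola_curve].
    + left; exists (- s), t; split; [lra|].
      eapply pset_eq_trans; [exact HC|].
      eapply pset_eq_trans; [apply image_phi_ext, E | apply image_phi_line_curve].
  - intros [[s [t [Hs E]]] | [a [b [c [Ha E]]]]].
    + apply (M_circles_ext _ _ _ _ (line_curve s t)); [now apply line_curve_M | exact E].
    + destruct (Rlt_dec 0 a) as [Hp|Hn].
      * apply (M_circles_ext _ _ _ _ (fabc_curve f1 f2 a (- b) c)); [now apply fabc_curve_M|].
        eapply pset_eq_trans; [exact E|].
        rewrite <- (Ropp_involutive b) at 1; now apply pset_eq_sym, fabc_curve_reciprocal.
      * apply (M_circles_ext _ _ _ _ (image phi (fabc_curve f3 f4 (- a) b c))).
        { apply image_phi_Cminus_M; left; exists (- a), b, c; split; [lra | apply pset_eq_refl]. }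
        eapply pset_eq_trans; [exact E|]. apply pset_eq_sym.
        eapply pset_eq_trans; [apply image_phi_ext, fabc_curve_reciprocal; auto; lra|].
        pose proof (image_phi_hyperbola_curve (- a) (- b) c) as H.
        now rewrite !Ropp_involutive in H.
Qed.

Lemma isomorphic_of_same_circles (CS1 CS2 : circle_set) :
  (forall C, CS1 C <-> CS2 C) -> (forall C D, CS2 C -> pset_eq D C -> CS2 D) ->
  isomorphic CS1 CS2.
Proof.
  intros E Ext.
  assert (Id : forall C, pset_eq (image (fun p => p) C) C)
    by (intros C p; split; [intros [q [Hq ->]]; exact Hq | intro Hp; now exists p]).
  exists (fun p => p); split; [split; [now intros p q | intro q; now exists q]|]; split.
  - intros C HC; apply (Ext C); [now apply E | apply Id].
  - intros D HD; exists D; split; [now apply E | apply pset_eq_sym, Id].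
Qed.

Theorem theorem5p5 (f1 f2 f3 f4 : R -> R) :
  strongly_hyperbolic f1 -> strongly_hyperbolic f2 ->
  strongly_hyperbolic f3 -> strongly_hyperbolic f4 ->
  f1 1 = 1 -> f3 1 = 1 ->
  (isomorphic (M_circles f1 f2 f3 f4) classical_circles <->
   (forall x, 0 < x ->
      f1 x = 1 / x /\ f2 x = 1 / x /\ f3 x = 1 / x /\ f4 x = 1 / x)).
Proof.
  intros H1 H2 H3 H4 F1 F3; split.
  - apply M_reciprocal_of_isomorphic; auto using strongly_hyperbolic_pos_injective.
  - intro E; apply isomorphic_of_same_circles; [|exact classical_circles_ext].
    apply M_circles_reciprocal; intros x Hx; now destruct (E x Hx) as (? & ? & ? & ?).
Qed.
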